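(* Let $z$ be an indeterminate and $c=1+(q-1)z$. For every $n\ge0$, $$\frac{1}{z}\int_0^z\beta_n(y)\,dy=\frac{1}{(q-1)^n}\sum_{k=0}^{n}\binom{n}{k}(-1)^{n-k}\frac{[k+1]_c}{[k+1]_q}.$$
   Context: $q$ is an indeterminate. The $q$-Bernoulli–Carlitz numbers $\beta_n\in\mathbb{Q}(q)$ are defined by: for all $n\ge0$, $q\sum_{k=0}^{n}\binom{n}{k}q^k\beta_k-\beta_n$ equals $q-1$ if $n=0$, $1$ if $n=1$, and $0$ if $n>1$. Let $\Psi$ be the $\mathbb{Q}(q)$-linear form on $\mathbb{Q}(q)[x]$ with $\Psi(x^n)=\beta_n$, extended $\mathbb{Q}(q)[z]$-linearly to $\mathbb{Q}(q)[z][x]$. The $q$-Bernoulli–Carlitz polynomials are $\beta_n(z)=\Psi\big((z+(z(q-1)+1)x)^n\big)\in\mathbb{Q}(q)[z]$, and $\int_0^z\beta_n(y)\,dy$ is the ordinary integral of this polynomial. $[m]_q=(q^m-1)/(q-1)$ and $[m]_c=(c^m-1)/(c-1)=1+c+\dots+c^{m-1}$. *)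

From HB Require Import structures.
From mathcomp Require Import all_boot all_order all_algebra.
Set Implicit Arguments. Unset Strict Implicit. Unset Printing Implicit Defensive.
Import Order.TTheory GRing.Theory Num.Theory.
Local Open Scope ring_scope.

Definition Qq : fieldType := {fraction {poly rat}}.
Definition qv : Qq := FracField.tofrac ('X : {poly rat}).

Definition qint (m : nat) : Qq := (qv ^+ m - 1) / (qv - 1).

Definition cint (c : {poly Qq}) (m : nat) : {poly Qq} := \sum_(i < m) c ^+ i.

Definition is_qBC (beta : nat -> Qq) : Prop :=
  forall n : nat,
    qv * (\sum_(k < n.+1) (qv ^+ k *+ 'C(n, k)) * beta k) - beta n
    = (if n == 0%N then qv - 1 else if n == 1%N then 1 else 0).

(* Psi : Q(q)[z][x] -> Q(q)[z], Q(q)[z]-linear with Psi(x^n) = beta_n *)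
Definition Psi (beta : nat -> Qq) (P : {poly {poly Qq}}) : {poly Qq} :=
  \sum_(i < size P) P`_i * (beta i)%:P.

Definition cz : {poly Qq} := 1 + (qv - 1) *: 'X.

Definition betapoly (beta : nat -> Qq) (n : nat) : {poly Qq} :=
  Psi beta ((('X : {poly Qq})%:P + (cz)%:P * 'X) ^+ n).

Definition prim (p : {poly Qq}) : {poly Qq} :=
  \poly_(i < (size p).+1) (match i with 0%N => 0 | j.+1 => p`_j / (j.+1)%:R end).

From mathcomp Require Import all_boot all_order all_algebra ring.
Set Implicit Arguments.
Unset Strict Implicit.
Unset Printing Implicit Defensive.
Import GRing.Theory.
Local Open Scope ring_scope.

(** With [v = 1 + (q-1)x] one has [v(1+qx) = q v], so the defining recurrence,
    extended by linearity to [q Psi(p(1+qx)) - Psi(p) = (q-1) p(0) + p'(0)],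
    gives [Psi(v^k) = (k+1)/[k+1]_q].  Since [(q-1)(z + c x) = c v - 1], the
    binomial theorem yields
    [(q-1)^n beta_n(z) = sum_k C(n,k) (-1)^(n-k) c^k (k+1)/[k+1]_q],
    and [z [k+1]_c / (k+1)] is the antiderivative of [c^k] vanishing at [0],
    because [(q-1) z [k+1]_c = c^(k+1) - 1]. *)

Section LinearForm.

Variable R : comNzRingType.

Definition lin_form (b : nat -> R) (p : {poly R}) : R :=
  \sum_(i < size p) p`_i * b i.

Variable b : nat -> R.

Lemma lin_form_widen (p : {poly R}) N :
  (size p <= N)%N -> lin_form b p = \sum_(i < N) p`_i * b i.
Proof.
move=> leN; rewrite /lin_form (big_ord_widen N (fun i => p`_i * b i) leN).
rewrite big_mkcond /=; apply: eq_bigr => i _; case: ltnP => // le_p_i.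
by rewrite nth_default // mul0r.
Qed.

Lemma lin_formD (p r : {poly R}) :
  lin_form b (p + r) = lin_form b p + lin_form b r.
Proof.
set N := maxn (size p) (size r).
rewrite !(@lin_form_widen _ N) ?size_polyD ?leq_maxl ?leq_maxr // -big_split.
by apply: eq_bigr => i _; rewrite coefD mulrDl.
Qed.

Lemma lin_formZ a (p : {poly R}) : lin_form b (a *: p) = a * lin_form b p.
Proof.
rewrite !(@lin_form_widen _ (size p)) ?size_scale_leq // mulr_sumr.
by apply: eq_bigr => i _; rewrite coefZ mulrA.
Qed.

Lemma lin_form_mul_polyC c (p : {poly R}) :
  lin_form b (c%:P * p) = c * lin_form b p.
Proof. by rewrite mul_polyC lin_formZ. Qed.

Lemma lin_form0 : lin_form b 0 = 0.
Proof. by rewrite /lin_form size_poly0 big_ord0. Qed.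

Lemma lin_form_sum I (r : seq I) (P : pred I) (F : I -> {poly R}) :
  lin_form b (\sum_(i <- r | P i) F i) = \sum_(i <- r | P i) lin_form b (F i).
Proof. exact: (big_morph _ lin_formD lin_form0). Qed.

Lemma lin_formXn n : lin_form b 'X^n = b n.
Proof.
rewrite /lin_form size_polyXn big_ord_recr /= coefXn eqxx mul1r big1 ?add0r //.
by move=> i _; rewrite coefXn (ltn_eqF (ltn_ord i)) mul0r.
Qed.

End LinearForm.

Lemma lin_form_map_polyC (R : comNzRingType) (b : nat -> R) (p : {poly R}) :
  lin_form (fun i => (b i)%:P) p^:P = (lin_form b p)%:P.
Proof.
rewrite /lin_form size_map_polyC rmorph_sum; apply: eq_bigr => i _.
by rewrite coef_map rmorphM.
Qed.

Lemma eq_linear_forms (R : comNzRingType) (L1 L2 : {poly R} -> R) :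
  (forall p r, L1 (p + r) = L1 p + L1 r) -> (forall a p, L1 (a *: p) = a * L1 p) ->
  (forall p r, L2 (p + r) = L2 p + L2 r) -> (forall a p, L2 (a *: p) = a * L2 p) ->
  (forall n, L1 'X^n = L2 'X^n) -> forall p, L1 p = L2 p.
Proof.
move=> L1D L1Z L2D L2Z eqX p.
have L0 (L : {poly R} -> R) : (forall a p, L (a *: p) = a * L p) -> L 0 = 0.
  by move=> LZ; rewrite -(scale0r 0) LZ mul0r.
rewrite -[p]coefK poly_def (big_morph _ L1D (L0 _ L1Z)) (big_morph _ L2D (L0 _ L2Z)).
by apply: eq_bigr => i _; rewrite L1Z L2Z eqX.
Qed.

Lemma qBC_recurrence_poly beta (hbeta : is_qBC beta) (p : {poly Qq}) :
  qv * lin_form beta (p \Po (1 + qv *: 'X)) - lin_form beta p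
  = (qv - 1) * p.[0] + (p^`()).[0].
Proof.
pose L1 p := qv * lin_form beta (p \Po (1 + qv *: 'X)) - lin_form beta p.
pose L2 (p : {poly Qq}) := (qv - 1) * p.[0] + (p^`()).[0].
apply: (@eq_linear_forms _ L1 L2) => {p} [p r|a p|p r|a p|n]; rewrite /L1 /L2.
- by rewrite comp_polyD !lin_formD mulrDr opprD addrACA.
- by rewrite comp_polyZ !lin_formZ mulrCA -mulrBr.
- by rewrite derivD !hornerD mulrDr addrACA.
- by rewrite derivZ !hornerZ mulrCA -mulrDr.
rewrite comp_Xn_poly lin_formXn exprDn lin_form_sum.
under eq_bigr => i _ do rewrite expr1n mul1r exprZn scalerMnl lin_formZ lin_formXn.
rewrite hbeta derivXn hornerMn !hornerXn.
by case: n => [|[|n]] /=; rewrite ?expr0n ?mulr1 ?mulr0 ?mul0rn ?addr0 ?add0r.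
Qed.

Lemma affine_comp_qshift (R : comNzRingType) (q : R) (v := 1 + (q - 1) *: 'X) :
  v \Po (1 + q *: 'X) = q *: v.
Proof.
rewrite /v comp_polyD comp_polyZ comp_polyX comp_polyC -!mul_polyC polyCB polyC1.
ring.
Qed.

Lemma deriv_cz : cz^`() = (qv - 1)%:P.
Proof. by rewrite /cz derivD derivC derivZ derivX add0r -mul_polyC mulr1. Qed.

Lemma horner_cz0 : cz.[0] = 1.
Proof. by rewrite /cz hornerD hornerZ hornerX hornerC mulr0 addr0. Qed.

Lemma qv_expS_sub1_neq0 m : qv ^+ m.+1 - 1 != 0.
Proof.
rewrite /qv -tofracXn -tofrac1 -tofracB tofrac_eq0.
by rewrite -size_poly_eq0 -polyC1 size_XnsubC.
Qed.

Lemma qv_sub1_neq0 : qv - 1 != 0.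
Proof. by have := qv_expS_sub1_neq0 0; rewrite expr1. Qed.

Lemma natrS_neq0 m : m.+1%:R != 0 :> Qq.
Proof.
rewrite -(rmorph_nat (@tofrac _)) tofrac_eq0 -polyC_natr polyC_eq0.
by rewrite Num.Theory.pnatr_eq0.
Qed.

Lemma lin_form_cz_exp beta (hbeta : is_qBC beta) k :
  lin_form beta (cz ^+ k) = k.+1%:R / qint k.+1.
Proof.
have := qBC_recurrence_poly hbeta (cz ^+ k).
rewrite rmorphXn /= affine_comp_qshift exprZn lin_formZ deriv_exp deriv_cz.
rewrite horner_exp hornerMn hornerM horner_exp hornerC horner_cz0 !expr1n !mulr1.
rewrite mulrA -exprS -{2}(mul1r (lin_form beta _)) -mulrBl -mulrS.
rewrite -[(qv - 1) *+ _]mulr_natr => eq_rec.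
rewrite /qint invf_div mulrA (mulrC _ (qv - 1)) -eq_rec mulrC.
by rewrite mulKf ?qv_expS_sub1_neq0.
Qed.

Lemma scaled_betapoly_base (R : comNzRingType) (a : R) (c := 1 + a *: 'X) :
  a%:P%:P * ('X%:P + c%:P * 'X) = -1 + c%:P * c^:P.
Proof.
have -> : c%:P = 1 + a%:P%:P * 'X%:P by rewrite polyCD polyC1 -mul_polyC polyCM.
have -> : c^:P = 1 + a%:P%:P * 'X.
  by rewrite raddfD /= rmorph1 map_polyZ map_polyX -mul_polyC.
ring.
Qed.

Lemma lin_form_affine_exp (R : comNzRingType) (b : nat -> R) (a : R)
    (c := 1 + a *: 'X) n :
  a ^+ n *: lin_form (fun i => (b i)%:P) (('X%:P + c%:P * 'X) ^+ n) =
  \sum_(i < n.+1) (((-1) ^+ (n - i) *+ 'C(n, i)) * lin_form b (c ^+ i)) *: c ^+ i.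
Proof.
rewrite -mul_polyC -lin_form_mul_polyC !rmorphXn /= -exprMn.
rewrite scaled_betapoly_base exprDn lin_form_sum; apply: eq_bigr => i _.
rewrite exprMn -mulrnAl mulrA -!rmorphXn /=.
have -> : (-1) ^+ (n - i) *+ 'C(n, i) = (((-1) ^+ (n - i) *+ 'C(n, i))%:P)%:P
    :> {poly {poly R}} by rewrite !rmorphMn !rmorphXn !rmorphN1.
rewrite -rmorphM lin_form_mul_polyC lin_form_map_polyC.
by rewrite mulrC mulrA -polyCM mul_polyC mulrC.
Qed.

Lemma betapoly_expand beta n :
  (qv - 1) ^+ n *: betapoly beta n =
  \sum_(i < n.+1) (((-1) ^+ (n - i) *+ 'C(n, i)) * lin_form beta (cz ^+ i)) *: cz ^+ i.
Proof. exact: lin_form_affine_exp. Qed.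

Lemma prim_eq p r : r^`() = p -> r.[0] = 0 -> prim p = r.
Proof.
move=> r'_p r0; apply/polyP => -[|j]; rewrite coef_poly /=.
  by rewrite -horner_coef0 r0.
have -> : r`_j.+1 = p`_j / j.+1%:R.
  by rewrite -r'_p coef_deriv -(mulr_natr r`_j.+1) mulfK ?natrS_neq0.
by case: ltnP => // le_p_j; rewrite nth_default // mul0r.
Qed.

Lemma scale_X_cint (a : Qq) (c := 1 + a *: 'X) m :
  a *: ('X * cint c m) = c ^+ m - 1.
Proof.
have -> : c ^+ m - 1 = (c - 1) * cint c m by exact: subrX1.
by rewrite scalerAl /c [1 + _]addrC addrK.
Qed.

Lemma deriv_X_cint_cz k : ('X * cint cz k.+1)^`() = k.+1%:R *: cz ^+ k.
Proof.
apply: (scalerI qv_sub1_neq0).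
rewrite -derivZ scale_X_cint derivB derivC subr0 deriv_exp deriv_cz.
by rewrite mul_polyC scaler_nat scalerMnr.
Qed.

Theorem mainTheorem5 (beta : nat -> Qq) (hbeta : is_qBC beta) (n : nat) :
  prim (betapoly beta n) =
  'X * (((qv - 1) ^+ n)^-1 *:
        \sum_(k < n.+1) ((((-1) ^+ (n - k) *+ 'C(n, k)) / qint k.+1) *: cint cz k.+1)).
Proof.
have qvn_neq0 : (qv - 1) ^+ n != 0 by rewrite expf_neq0 ?qv_sub1_neq0.
apply: prim_eq; last by rewrite hornerM hornerX mul0r.
apply: (scalerI qvn_neq0); rewrite betapoly_expand -scalerAr derivZ scalerA.
rewrite mulfV // scale1r mulr_sumr linear_sum /=; apply: eq_bigr => k _.
rewrite -scalerAr derivZ deriv_X_cint_cz scalerA lin_form_cz_exp //.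
by rewrite mulrA mulrAC.
Qed.
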